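(* Let $P$ be an instance of $k$-means clustering with $z$ outliers, $\delta\in(0,1)$, and let $S$ be a finite nonempty multiset of points of $P$ such that $|S\cap C^*_j|\ge(1-\delta)\frac{|C^*_j|}{n}|S|$ for every $1\le j\le k$. Let $S_{opt}=S\cap P_{opt}$. Then for any finite set $H\subset\mathbb{R}^D$, $Cost(\tilde P_{opt},H)\le\frac{1}{1-\delta}\frac{n}{|S|}Cost(\tilde S_{opt},H)$.
   Context: $P\subset\mathbb{R}^D$, $|P|=n$, $0<z<n$. $dist(p,H)=\min_{q\in H}\|p-q\|$; $Cost(X,Y)=\sum_{q\in X}dist(q,Y)^2$ (with multiplicity). $P_{opt}\subset P$ with $|P_{opt}|=n-z$ is the set of inliers of an optimal solution of $k$-means with $z$ outliers, $C^*_1,\dots,C^*_k$ the optimal clusters forming $P_{opt}$, $o^*_j$ the mean of $C^*_j$. Star shaped transformation: for $p\in C^*_j$, $\tilde p=o^*_j$; for $U\subseteq P_{opt}$ (multiset), $\tilde U=\{\tilde p:p\in U\}$ as a multiset. *)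

From HB Require Import structures.
From mathcomp Require Import all_boot all_order all_algebra.
From mathcomp Require Import reals.
Set Implicit Arguments. Unset Strict Implicit. Unset Printing Implicit Defensive.
Import Order.TTheory GRing.Theory Num.Theory.
Local Open Scope ring_scope.

Section Defs.
Variables (R : realType) (D : nat).

Definition edist (p q : 'rV[R]_D) : R :=
  Num.sqrt (\sum_(i < D) (p 0 i - q 0 i) ^+ 2).

Definition dist (p : 'rV[R]_D) (H : seq 'rV[R]_D) : R :=
  \big[Num.min/edist p (head p H)]_(q <- H) edist p q.

(* Cost(X,Y) = sum_{q in X} dist(q,Y)^2, X a multiset (list, with multiplicity) *)
Definition Cost (X Y : seq 'rV[R]_D) : R :=
  \sum_(x <- X) dist x Y ^+ 2.

Definition pts (n : nat) (p : 'I_n -> 'rV[R]_D) (A : {set 'I_n}) : seq 'rV[R]_D :=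
  [seq p i | i in A].

Definition centers (k : nat) (Y : 'I_k -> 'rV[R]_D) : seq 'rV[R]_D :=
  [seq Y j | j : 'I_k].

(* (Popt, c, X) is an optimal solution of k-means with z outliers on the
   point set {p i | i < n}: Popt is the set of inliers (n - z of them), X the
   k centers, c i the index of a nearest center of the inlier p i (so the
   optimal clusters are C*_j = {i in Popt | c i = j}), and the cost of the
   inliers w.r.t. X is minimal among all choices of z outliers and k centers. *)
Definition opt_kmeans_outliers (n k z : nat) (p : 'I_n -> 'rV[R]_D)
  (Popt : {set 'I_n}) (c : 'I_n -> 'I_k) (X : 'I_k -> 'rV[R]_D) : Prop :=
  [/\ #|Popt| = (n - z)%N,
      (forall i, i \in Popt -> forall j, edist (p i) (X (c i)) <= edist (p i) (X j)) &
      (forall (Z : {set 'I_n}) (Y : 'I_k -> 'rV[R]_D), #|Z| = z ->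
         Cost (pts p Popt) (centers X) <= Cost (pts p (~: Z)) (centers Y))].

Definition clus (n k : nat) (Popt : {set 'I_n}) (c : 'I_n -> 'I_k) (j : 'I_k)
  : {set 'I_n} := [set i in Popt | c i == j].

Definition mean (n : nat) (p : 'I_n -> 'rV[R]_D) (A : {set 'I_n}) : 'rV[R]_D :=
  (#|A|%:R)^-1 *: \sum_(i in A) p i.

Definition star (n k : nat) (p : 'I_n -> 'rV[R]_D) (Popt : {set 'I_n})
  (c : 'I_n -> 'I_k) (U : seq 'I_n) : seq 'rV[R]_D :=
  [seq mean p (clus Popt c (c i)) | i <- U].

End Defs.

From HB Require Import structures.
From mathcomp Require Import all_boot all_order all_algebra.
From mathcomp Require Import reals ring.
Set Implicit Arguments.
Unset Strict Implicit.
Unset Printing Implicit Defensive.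
Import Order.TTheory GRing.Theory Num.Theory.
Local Open Scope ring_scope.

(* The star transformation sends every inlier of C*_j to o*_j, so the cost of
   a star-transformed multiset is sum_j m_j * dist(o*_j, H)^2, where m_j counts
   its points in C*_j.  Both sides are thus nonnegative combinations of the
   same weights, and the sampling hypothesis compares the coefficients m_j
   cluster by cluster. *)

Lemma sum_comp_fibers (V : nmodType) (I : Type) (J : finType) (c : I -> J)
    (F : J -> V) (U : seq I) :
  \sum_(i <- U) F (c i) = \sum_j F j *+ count (fun i => c i == j) U.
Proof.
rewrite (partition_big c xpredT) //=; apply: eq_bigr => j _.
rewrite (eq_bigr (fun=> F j)) => [|i /eqP -> //].
by rewrite big_const_seq iter_addr_0.
Qed.

Lemma ler_unscale_proportion (R : realFieldType) (d a b n s : R) :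
    0 < n -> 0 < s -> d < 1 ->
  (1 - d) * (a / n) * s <= b -> a <= (1 - d)^-1 * (n / s) * b.
Proof.
move=> n_gt0 s_gt0 d_lt1 le_ab.
have subd_gt0 : 0 < 1 - d by rewrite subr_gt0.
have -> : a = (1 - d)^-1 * (n / s) * ((1 - d) * (a / n) * s).
  by field; rewrite !gt_eqF.
by rewrite ler_wpM2l // mulr_ge0 ?invr_ge0 ?ltW ?divr_gt0.
Qed.

Section StarCost.
Variables (R : realType) (D n k : nat) (p : 'I_n -> 'rV[R]_D).
Variables (Popt : {set 'I_n}) (c : 'I_n -> 'I_k).

Lemma Cost_star (U : seq 'I_n) (H : seq 'rV[R]_D) :
  Cost (star p Popt c U) H =
  \sum_j dist (mean p (clus Popt c j)) H ^+ 2 *+ count (fun i => c i == j) U.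
Proof.
rewrite /Cost /star big_map.
exact: (sum_comp_fibers c (fun j => dist (mean p (clus Popt c j)) H ^+ 2)).
Qed.

Lemma count_enum_clus (j : 'I_k) :
  count (fun i => c i == j) (enum Popt) = #|clus Popt c j|.
Proof.
rewrite -sum1_count big_enum_cond -sum1_card; apply: eq_bigl => i.
by rewrite inE.
Qed.

Lemma count_inliers_clus (S : seq 'I_n) (j : 'I_k) :
  count (fun i => c i == j) [seq i <- S | i \in Popt] =
  count (fun i => i \in clus Popt c j) S.
Proof. by rewrite count_filter; apply: eq_count => i /=; rewrite inE andbC. Qed.

End StarCost.

Theorem lemma7 (R : realType) (D n k z : nat) (p : 'I_n -> 'rV[R]_D)
  (Popt : {set 'I_n}) (c : 'I_n -> 'I_k) (X : 'I_k -> 'rV[R]_D)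
  (delta : R) (S : seq 'I_n) (H : seq 'rV[R]_D) :
  injective p -> (0 < k)%N -> (0 < z)%N -> (z < n)%N ->
  opt_kmeans_outliers z p Popt c X ->
  0 < delta < 1 ->
  (0 < size S)%N ->
  (forall j : 'I_k,
     (1 - delta) * (#|clus Popt c j|%:R / n%:R) * (size S)%:R
       <= (count (fun i => i \in clus Popt c j) S)%:R) ->
  H != [::] ->
  Cost (star p Popt c (enum Popt)) H
    <= (1 - delta)^-1 * (n%:R / (size S)%:R)
       * Cost (star p Popt c [seq i <- S | i \in Popt]) H.
Proof.
move=> _ _ z_gt0 lt_zn _ /andP[_ delta_lt1] S_gt0 sampleS _.
rewrite !Cost_star mulr_sumr; apply: ler_sum => j _.
rewrite count_enum_clus count_inliers_clus.
rewrite -(mulr_natr _ #|_|) -(mulr_natr _ (count _ _)) mulrCA.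
rewrite ler_wpM2l ?sqr_ge0 //; apply: ler_unscale_proportion (sampleS j) => //.
  by rewrite ltr0n (leq_trans z_gt0 (ltnW lt_zn)).
by rewrite ltr0n.
Qed.
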